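(* Let $\mathbb{C}$ be a locally small category in which all morphisms are monomorphisms, and let $A\in\mathrm{Ob}(\mathbb{C})$. Then $t_{\mathbb{C}}(A)$ is finite if and only if both $t^\sim_{\mathbb{C}}(A)$ and $\mathrm{Aut}(A)$ are finite, and in that case $t_{\mathbb{C}}(A)=|\mathrm{Aut}(A)|\cdot t^\sim_{\mathbb{C}}(A)$.
   Context: For $k\ge2$, $t\ge1$ and objects $A,B,C$: $C\to(B)^A_{k,t}$ means that for every $\chi:\hom(A,C)\to\{0,\dots,k-1\}$ there is $w\in\hom(B,C)$ with $|\chi(w\cdot\hom(A,B))|\le t$ (where $w\cdot X=\{w\cdot x:x\in X\}$). $t_{\mathbb{C}}(A)$ is the least positive integer $n$ such that for all $k\ge2$ and all $B\in\mathrm{Ob}(\mathbb{C})$ there is $C\in\mathrm{Ob}(\mathbb{C})$ with $C\to(B)^A_{k,n}$; $t_{\mathbb{C}}(A)=\infty$ if no such $n$ exists. For $f,f'\in\hom(A,B)$ let $f\sim_A f'$ iff $f'=f\cdot\alpha$ for some $\alpha\in\mathrm{Aut}(A)$, and $\binom{B}{A}=\hom(A,B)/{\sim_A}$; for $w\in\hom(B,C)$, $w\cdot(f/{\sim_A})=(w\cdot f)/{\sim_A}$. $C\overset{\sim}{\to}(B)^A_{k,t}$ means that for every $\chi:\binom{C}{A}\to\{0,\dots,k-1\}$ there is $w\in\hom(B,C)$ with $|\chi(w\cdot\binom{B}{A})|\le t$. $t^\sim_{\mathbb{C}}(A)$ is the least positive integer $n$ such that for all $k\ge2$ and all $B$ there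 is $C$ with $C\overset{\sim}{\to}(B)^A_{k,n}$, and $\infty$ otherwise. *)

From mathcomp Require Import all_boot.
From mathcomp Require Import boolp.

Set Implicit Arguments.
Unset Strict Implicit.
Unset Printing Implicit Defensive.

Record category := Category {
  Ob : Type;
  Hom : Ob -> Ob -> Type;
  comp : forall A B C : Ob, Hom B C -> Hom A B -> Hom A C;
  idm : forall A : Ob, Hom A A;
  compA : forall (A B C D : Ob) (h : Hom C D) (g : Hom B C) (f : Hom A B),
      comp h (comp g f) = comp (comp h g) f;
  comp1m : forall (A B : Ob) (f : Hom A B), comp (idm B) f = f;
  compm1 : forall (A B : Ob) (f : Hom A B), comp f (idm A) = f
}.

Arguments comp {c A B C}.
Arguments idm {c}.
Arguments Hom : clear implicits.
Arguments Ob : clear implicits.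

Section Defs.
Variable CC : category.

Definition all_mono : Prop :=
  forall (X Y Z : Ob CC) (w : Hom CC Y Z) (f g : Hom CC X Y), comp w f = comp w g -> f = g.

Definition is_iso (A : Ob CC) (a : Hom CC A A) : Prop :=
  exists b : Hom CC A A, comp a b = idm A /\ comp b a = idm A.
Definition Aut (A : Ob CC) := { a : Hom CC A A | is_iso a }.

Definition has_card (T : Type) (n : nat) : Prop :=
  exists f : 'I_n -> T, bijective f.

Definition arrows (A B C : Ob CC) (k t : nat) : Prop :=
  forall chi : Hom CC A C -> 'I_k,
    exists w : Hom CC B C,
      #|[set i : 'I_k | `[< exists f : Hom CC A B, chi (comp w f) = i >]]| <= t.

Definition simA (A X : Ob CC) (f f' : Hom CC A X) : Prop :=
  exists alpha : Aut A, f' = comp f (proj1_sig alpha).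

(* binom(X, A) = Hom(A, X) / ~_A, as the set of equivalence classes *)
Definition binom (A X : Ob CC) :=
  { P : Hom CC A X -> Prop | exists f : Hom CC A X, P = simA f }.
Definition cls (A X : Ob CC) (f : Hom CC A X) : binom A X :=
  exist _ (simA f) (ex_intro _ f erefl).

(* C ~> (B)^A_{k,t}; note w . (f/~) = (w . f)/~ *)
Definition arrows_sim (A B C : Ob CC) (k t : nat) : Prop :=
  forall chi : binom A C -> 'I_k,
    exists w : Hom CC B C,
      #|[set i : 'I_k | `[< exists f : Hom CC A B, chi (cls (comp w f)) = i >]]| <= t.

(* least positive n with P n, None (= infinity) if none exists *)
Definition least_pos (P : nat -> Prop) : option nat :=
  match pselect (exists n, `[< (0 < n) /\ P n >]) with
  | left h => Some (ex_minn h)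
  | right _ => None
  end.

Definition tC (A : Ob CC) : option nat :=
  least_pos (fun n => forall k, 2 <= k -> forall B : Ob CC, exists C : Ob CC, arrows A B C k n).

Definition tC_sim (A : Ob CC) : option nat :=
  least_pos (fun n => forall k, 2 <= k -> forall B : Ob CC, exists C : Ob CC, arrows_sim A B C k n).

End Defs.

From mathcomp Require Import all_boot boolp.

Set Implicit Arguments.
Unset Strict Implicit.
Unset Printing Implicit Defensive.

(* Fix a representative r_c of every class c in binom(A, C).  As all
   morphisms are monic, each h : A -> C factors as h = r_[h] . alpha for a
   unique alpha in Aut(A), compatibly with precomposition by automorphisms.
   Colouring each class by the tuple of colours of its members turns a
   k-colouring of Hom(A, C) into a k^|Aut(A)|-colouring of binom(A, C), which
   gives t <= |Aut(A)| t~.  Conversely, colour h by the pair (colour of [h],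
   alpha) for a class colouring witnessing that t~ - 1 fails: every copy of B
   meets at least t~ class colours, each one together with all values of
   alpha, which gives t >= |Aut(A)| t~; the same count with any finite set of
   automorphisms shows that Aut(A) is finite when t is. *)

Lemma least_posP (P : nat -> Prop) n : least_pos P = Some n ->
  [/\ 0 < n, P n & forall n', 0 < n' -> P n' -> n <= n'].
Proof.
rewrite /least_pos; case: pselect => // ex_n [<-].
case: ex_minnP => m /asboolP[m_gt0 Pm] m_min; split=> // n' n'_gt0 Pn'.
by apply: m_min; apply/asboolP.
Qed.

Lemma least_pos_exists (P : nat -> Prop) n : 0 < n -> P n ->
  exists m, least_pos P = Some m.
Proof.
move=> n_gt0 Pn; rewrite /least_pos; case: pselect => [|[]]; first by eexists.
by exists n; apply/asboolP.
Qed.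

Lemma has_card_gt0 (T : Type) (x : T) n : has_card T n -> 0 < n.
Proof. by case=> f [g _ _]; case: (g x); case: n {f g}. Qed.

Lemma has_card_of_bounded_injections (T : Type) N :
  (forall j (e : 'I_j -> T), injective e -> j <= N) -> exists n, has_card T n.
Proof.
move=> inj_le.
pose injects j := `[< exists e : 'I_j -> T, injective e >].
have injects0 : exists j, injects j.
  exists 0; apply/asboolP.
  have e0 : 'I_0 -> T by move=> i; have := ltn_ord i; rewrite ltn0.
  by exists e0 => i; have := ltn_ord i; rewrite ltn0.
have injects_le j : injects j -> j <= N by move=> /asboolP[e /inj_le].
case: (ex_maxnP injects0 injects_le) => j /asboolP[e e_inj] j_max.
have e_surj x : exists i, e i = x.
  apply: contrapT => /forallNP e_x.
  pose e' (i : 'I_j.+1) := if unlift ord_max i is Some i' then e i' else x.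
  suff /j_max : injects j.+1 by rewrite ltnn.
  apply/asboolP; exists e' => i1 i2; rewrite /e'.
  case: unliftP => [i1' ->|->]; case: unliftP => [i2' ->|->] //.
  - by move/e_inj->.
  - by move/e_x.
  - by move/esym/e_x.
exists j, e; exists (fun x => proj1_sig (cid (e_surj x))) => [i|x].
- by apply: e_inj; rewrite (proj2_sig (cid (e_surj (e i)))).
- exact: (proj2_sig (cid (e_surj x))).
Qed.

Definition ord_pinv (T : Type) n (e : 'I_n.+1 -> T) (x : T) : 'I_n.+1 :=
  odflt ord0 [pick i | `[< e i = x >]].

Lemma ord_pinvK (T : Type) n (e : 'I_n.+1 -> T) : injective e -> cancel e (ord_pinv e).
Proof.
move=> e_inj i; rewrite /ord_pinv; case: pickP => [i' /asboolP /e_inj //|].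
by move=> /(_ i) /asboolP.
Qed.

Definition few_colors (W Y X : Type) (F : W -> Y -> X) (K : finType) (t : nat) :=
  forall chi : X -> K, exists w, #|[set i | `[< exists y, chi (F w y) = i >]]| <= t.

Lemma few_colors_ord (W Y X : Type) (F : W -> Y -> X) (K : finType) t :
  few_colors F 'I_#|K| t -> few_colors F K t.
Proof.
move=> few chi; have [w le_t] := few (fun x => enum_rank (chi x)); exists w.
rewrite -(card_imset _ (@enum_rank_inj K)); apply: leq_trans le_t.
apply/subset_leq_card/subsetP => _ /imsetP[i /[!inE] /asboolP[y <-] ->].
by apply/asboolP; exists y.
Qed.

Definition aut_hom (CC : category) (A : Ob CC) (a : Aut A) : Hom CC A A := proj1_sig a.
Coercion aut_hom : Aut >-> Hom.

Section Automorphisms.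
Variables (CC : category) (A : Ob CC).

Lemma aut_inj : injective (@aut_hom CC A).
Proof. by case=> a a_iso [b b_iso] /= ab; apply: eq_exist. Qed.

Definition aut1 : Aut A :=
  exist _ (idm A) (ex_intro _ (idm A) (conj (comp1m _) (comp1m _))).

Lemma has_card_aut_gt0 a : has_card (Aut A) a -> 0 < a.
Proof. exact: (has_card_gt0 aut1). Qed.

Lemma aut_mul_iso (a b : Aut A) : is_iso (comp a b).
Proof.
case: a b => a [a' [aa' a'a]] [b [b' [bb' b'b]]] /=.
exists (comp b' a'); split.
- by rewrite -compA (compA b) bb' comp1m.
- by rewrite -compA (compA a') a'a comp1m.
Qed.

Definition aut_mul (a b : Aut A) : Aut A := exist _ _ (aut_mul_iso a b).

Lemma aut_inv (a : Aut A) : exists b : Aut A, comp a b = idm A /\ comp b a = idm A.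
Proof.
case: a => a [b [ab ba]]; have b_iso : is_iso b by exists a.
by exists (exist _ b b_iso).
Qed.

Lemma simA_comp_aut (X : Ob CC) (h : Hom CC A X) (a : Aut A) : simA (comp h a) = simA h.
Proof.
apply/funext => g; apply/propext; split=> -[b ->].
- by exists (aut_mul a b); rewrite compA.
- have [a' [aa' _]] := aut_inv a.
  by exists (aut_mul a' b); rewrite /= -compA (compA a) aa' comp1m.
Qed.

Lemma cls_comp_aut (X : Ob CC) (h : Hom CC A X) (a : Aut A) : cls (comp h a) = cls h.
Proof. exact/eq_exist/simA_comp_aut. Qed.

Definition rep (X : Ob CC) (c : binom A X) : Hom CC A X := proj1_sig (cid (proj2_sig c)).

Lemma rep_factor (X : Ob CC) (h : Hom CC A X) : exists a : Aut A, h = comp (rep (cls h)) a.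
Proof.
change (simA (rep (cls h)) h).
have <- : simA h = simA (rep (cls h)) := proj2_sig (cid (proj2_sig (cls h))).
by exists aut1; rewrite /= compm1.
Qed.

Definition aut_coord (X : Ob CC) (h : Hom CC A X) : Aut A := proj1_sig (cid (rep_factor h)).

Lemma hom_decomp (X : Ob CC) (h : Hom CC A X) : h = comp (rep (cls h)) (aut_coord h).
Proof. exact: proj2_sig (cid (rep_factor h)). Qed.

Hypothesis mono : all_mono CC.

Lemma aut_coord_comp (X : Ob CC) (h : Hom CC A X) (a : Aut A) :
  aut_coord (comp h a) = aut_mul (aut_coord h) a.
Proof.
apply: aut_inj; apply: (mono (w := rep (cls h))) => /=.
by rewrite -[in LHS](cls_comp_aut h a) -hom_decomp compA -hom_decomp.
Qed.

Lemma aut_coord_surj (X : Ob CC) (h : Hom CC A X) (b : Aut A) :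
  exists a : Aut A, aut_coord (comp h a) = b.
Proof.
have [a' [aa' _]] := aut_inv (aut_coord h).
exists (aut_mul a' b); rewrite aut_coord_comp; apply: aut_inj.
by rewrite /= compA aa' comp1m.
Qed.

End Automorphisms.

Section RamseyBounds.
Variables (CC : category) (A : Ob CC).

Definition ramsey_bound (n : nat) : Prop :=
  forall k, 2 <= k -> forall B : Ob CC, exists C : Ob CC, arrows A B C k n.

Definition ramsey_sim_bound (n : nat) : Prop :=
  forall k, 2 <= k -> forall B : Ob CC, exists C : Ob CC, arrows_sim A B C k n.

Lemma ramsey_bound_sim n : ramsey_bound n -> ramsey_sim_bound n.
Proof.
move=> bound k k_ge2 B; have [C arr] := bound k k_ge2 B.
by exists C => chi; apply: (arr (fun f => chi (cls f))).
Qed.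

Lemma ramsey_sim_bound0 : ~ ramsey_sim_bound 0.
Proof.
move=> /(_ 2 (leqnn 2) A)[C /(_ (fun _ => ord0))[w]].
rewrite leqn0 => /eqP/cards0_eq/setP/(_ ord0); rewrite !inE => /asboolP[].
by exists (idm A).
Qed.

Lemma not_ramsey_sim_bound_pred m : tC_sim A = Some m -> ~ ramsey_sim_bound m.-1.
Proof.
case/least_posP; case: m => [|[|m]] // _ _ m_min; first exact: ramsey_sim_bound0.
by move/(m_min m.+1 isT); rewrite ltnn.
Qed.

Lemma ramsey_bound_mul m a :
  has_card (Aut A) a -> ramsey_sim_bound m -> ramsey_bound (m * a).
Proof.
move=> card_a bound k k_ge2 B; have [fa [ga _ gaK]] := card_a.
pose K := {ffun 'I_a -> 'I_k}.
have K_ge2 : 2 <= #|K|.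
  rewrite card_ffun !card_ord (leq_trans k_ge2) // -{1}[k]expn1 leq_exp2l //.
  exact: (has_card_aut_gt0 card_a).
have [C /few_colors_ord arr] := bound _ K_ge2 B; exists C => chi.
pose chi' (c : binom A C) : K := [ffun p => chi (comp (rep c) (fa p))].
have [w colors_le] := arr chi'; exists w.
set S := [set _ | _] in colors_le.
apply: leq_trans (_ : #|(fun x : K * 'I_a => x.1 x.2) @: setX S setT| <= _).
  apply/subset_leq_card/subsetP => _ /[!inE] /asboolP[f <-].
  apply/imsetP; exists (chi' (cls (comp w f)), ga (aut_coord (comp w f))).
    by rewrite in_setX in_setT andbT inE; apply/asboolP; exists f.
  by rewrite /= ffunE gaK -hom_decomp.
by rewrite (leq_trans (leq_imset_card _ _)) // cardsX cardsT card_ord leq_mul.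
Qed.

Hypothesis mono : all_mono CC.

Lemma ramsey_bound_lower M j (e : 'I_j -> Aut A) n :
  injective e -> ~ ramsey_sim_bound M -> ramsey_bound n -> M.+1 * j <= n.
Proof.
case: j e => [|j] e e_inj; first by rewrite muln0.
move=> /existsNP[k0 /not_implyP[k0_ge2 /existsNP[B /forallNP not_arr]]] bound.
pose K : finType := ('I_k0 * 'I_j.+1)%type.
have K_ge2 : 2 <= #|K| by rewrite card_prod !card_ord (leq_trans k0_ge2) ?leq_pmulr.
have [C /few_colors_ord arr] := bound _ K_ge2 B.
have /existsNP[chi' /forallNP many_colors] := not_arr C.
pose chi (f : Hom CC A C) : K := (chi' (cls f), ord_pinv e (aut_coord f)).
have [w colors_le] := arr chi.
set S := [set i | `[< exists f, chi' (cls (comp w f)) = i >]].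
have S_gt : M < #|S| by rewrite ltnNge; apply/negP => S_le; apply: (many_colors w).
apply: leq_trans colors_le; apply: leq_trans (leq_mul S_gt (leqnn j.+1)) _.
have -> : #|S| * j.+1 = #|setX S [set: 'I_j.+1]| by rewrite cardsX cardsT card_ord.
apply/subset_leq_card/subsetP.
move=> [_ i] /[!in_setX] /andP[/[!inE] /asboolP[f <-] _].
have [a a_coord] := aut_coord_surj mono (comp w f) (e i).
apply/asboolP; exists (comp f a).
by rewrite /chi compA cls_comp_aut a_coord ord_pinvK.
Qed.

Lemma tC_sim_mul_le m j (e : 'I_j -> Aut A) n :
  tC_sim A = Some m -> injective e -> ramsey_bound n -> m * j <= n.
Proof.
move=> tC_m e_inj; have [m_gt0 _ _] := least_posP tC_m.
rewrite -(prednK m_gt0); exact: ramsey_bound_lower e_inj (not_ramsey_sim_bound_pred tC_m).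
Qed.

End RamseyBounds.

Theorem proposition3p1 (CC : category) (A : Ob CC) :
  all_mono CC ->
  ((exists n, tC A = Some n) <->
     ((exists m, tC_sim A = Some m) /\ (exists a, has_card (Aut A) a)))
  /\
  (forall n m a, tC A = Some n -> tC_sim A = Some m -> has_card (Aut A) a ->
     n = a * m).
Proof.
move=> mono; split; first split.
- case=> n /least_posP[n_gt0 bound_n _].
  have [m tC_m] := least_pos_exists n_gt0 (ramsey_bound_sim bound_n).
  have [m_gt0 _ _] := least_posP tC_m.
  split; first by exists m.
  apply: (@has_card_of_bounded_injections _ n) => j e e_inj.
  exact: leq_trans (leq_pmull _ m_gt0) (tC_sim_mul_le mono tC_m e_inj bound_n).
- case=> -[m tC_m] [a card_a].
  have [m_gt0 bound_m _] := least_posP tC_m.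
  apply: least_pos_exists (ramsey_bound_mul card_a bound_m).
  by rewrite muln_gt0 m_gt0 (has_card_aut_gt0 card_a).
- move=> n m a tC_n tC_m card_a.
  have [_ bound_n n_min] := least_posP tC_n.
  have [m_gt0 bound_m _] := least_posP tC_m.
  have [fa [ga faK _]] := card_a.
  apply/eqP; rewrite eqn_leq mulnC (tC_sim_mul_le mono tC_m (can_inj faK) bound_n) andbT.
  apply: (n_min _ _ (ramsey_bound_mul card_a bound_m)).
  by rewrite muln_gt0 m_gt0 (has_card_aut_gt0 card_a).
Qed.
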